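(* Let $X$ be a compact Hausdorff space and let $\rho\colon X\times X\to[0,\infty]$ be a function continuous with respect to the upper topology on $[0,\infty]$ such that for all $x,y\in X$, $$\rho(x,y)=\inf_{z\in X}\big(\rho(x,z)+\rho(z,y)\big).$$ Let $A=\{x\in X\mid\rho(x,x)=0\}$. Then for all $x,y\in X$, $$\rho(x,y)=\inf_{a\in A}\big(\rho(x,a)+\rho(a,y)\big).$$
   Context: The upper topology on $[0,\infty]$ is the topology whose nonempty proper open sets are the sets $]u,\infty]$ for $u\in[0,\infty]$; continuity into it means lower semicontinuity. The infimum of the empty set is $\infty$. *)

From HB Require Import structures.
From mathcomp Require Import all_boot all_order all_algebra.
From mathcomp Require Import all_classical all_reals all_analysis.
Set Implicit Arguments. Unset Strict Implicit. Unset Printing Implicit Defensive.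
Import Order.TTheory GRing.Theory Num.Theory.
Local Open Scope classical_set_scope.
Local Open Scope ereal_scope.

(* Continuity of f : T -> [0,+oo] (values in \bar R) w.r.t. the upper topology
   on [0,+oo], whose nonempty proper open sets are ]u,+oo], u in [0,+oo]:
   every preimage of such a set is open (i.e. lower semicontinuity). *)
Definition upper_continuous (R : realType) (T : topologicalType)
  (f : T -> \bar R) : Prop :=
  forall u : \bar R, 0 <= u -> open (f @^-1` [set v | u < v]).

From HB Require Import structures.
From mathcomp Require Import all_boot all_order all_algebra.
From mathcomp Require Import all_classical all_reals all_analysis.
From mathcomp Require Import ring.
Import Order.TTheory GRing.Theory Num.Theory.
Local Open Scope classical_set_scope.
Local Open Scope ereal_scope.

(* Lower semicontinuity and compactness make the infimum defining rho(x, y)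
   attained.  Assume rho(x, y) finite and call z a geodesic point if
   rho(x, z) + rho(z, y) <= rho(x, y).  For such z, the set of w for which
   x, z, w, y lie in this order on a geodesic is closed and nonempty, and it
   shrinks when z is replaced by any of its points.  Compactness bounds
   chains of these sets, so by Zorn's lemma one of them, for z = t, is
   minimal; any w in it then belongs to its own set, which forces
   rho(w, w) = 0 with w on a geodesic from x to y. *)

Lemma compact_chain_bigcap (T : topologicalType) (F : set (set T)) :
  compact [set: T] -> F !=set0 ->
  (forall A, F A -> closed A) -> (forall A, F A -> A !=set0) ->
  total_on F subset -> \bigcap_(A in F) A !=set0.
Proof.
move=> Tco [A0 FA0] Fcl Fn0 Ftot.
have FF : ProperFilter (filter_from F id).
  apply: filter_from_proper => [|A /Fn0 //].
  apply: filter_from_filter; first by exists A0.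
  move=> A B FA FB; have [AB|BA] := Ftot _ _ FA FB.
    by exists A => // z Az; split => //; exact: AB.
  by exists B => // z Bz; split => //; exact: BA.
have [p [_ clp]] := Tco _ FF filterT.
exists p => A FA; apply: (Fcl _ FA).
by move: clp; rewrite clusterE => /(_ A); apply; exists A.
Qed.

Section lower_semicontinuity.
Context {R : realType} {T : topologicalType}.
Implicit Types f g : T -> \bar R.

Lemma lower_semicontinuous_cst (c : \bar R) :
  lower_semicontinuous (cst c : T -> \bar R).
Proof. by move=> x a ac; exists setT => //; exact: filterT. Qed.

Lemma lower_semicontinuous_comp {S : topologicalType} (g : T -> S)
    (f : S -> \bar R) :
  continuous g -> lower_semicontinuous f -> lower_semicontinuous (f \o g).
Proof.
move=> gc /lower_semicontinuousP fo; apply/lower_semicontinuousP => a.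
exact: open_comp (fun x _ => gc x) (fo a).
Qed.

Lemma lower_semicontinuousD f g :
  (forall x, 0 <= f x) -> (forall x, 0 <= g x) ->
  lower_semicontinuous f -> lower_semicontinuous g ->
  lower_semicontinuous (f \+ g).
Proof.
move=> f0 g0 lf lg x a /=.
have [fxoo _|fxn] := eqVneq (f x) +oo.
  have := lf x a; rewrite fxoo ltry => /(_ isT) [V nV HV].
  by exists V => // y Vy; apply: lt_le_trans (HV y Vy) _; rewrite leeDl.
have [gxoo _|gxn] := eqVneq (g x) +oo.
  have := lg x a; rewrite gxoo ltry => /(_ isT) [V nV HV].
  by exists V => // y Vy; apply: lt_le_trans (HV y Vy) _; rewrite leeDr.
have ff : f x \is a fin_num by rewrite ge0_fin_numE // ltey.
have gf : g x \is a fin_num by rewrite ge0_fin_numE // ltey.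
rewrite -(fineK ff) -(fineK gf) -EFinD lte_fin => alt.
set p := fine (f x) in alt *; set q := fine (g x) in alt *.
set e := ((p + q - a) / 2)%R.
have e0 : (0 < e)%R by rewrite divr_gt0 // subr_gt0.
have := lf x (p - e)%R; rewrite -(fineK ff) lte_fin gtrBl.
move=> /(_ e0) [V1 nV1 H1].
have := lg x (q - e)%R; rewrite -(fineK gf) lte_fin gtrBl.
move=> /(_ e0) [V2 nV2 H2].
exists (V1 `&` V2); first exact: filterI.
move=> y [/H1 h1 /H2 h2].
have -> : a = (p - e + (q - e))%R by rewrite /e; field.
by rewrite EFinD; apply: lteD.
Qed.

Lemma lower_semicontinuous_closed_le f (t : \bar R) :
  lower_semicontinuous f -> closed [set x | f x <= t].
Proof.
move=> /lower_semicontinuousP fo.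
have closed_le (r : R) : closed [set x | f x <= r%:E].
  rewrite (_ : [set x | _] = ~` [set x | r%:E < f x]); first exact/open_closedC.
  by apply/seteqP; split => x /=; rewrite leNgt => /negP.
case: t => [r| |]; first exact: closed_le.
  rewrite (_ : [set x | _] = setT); first exact: closedT.
  by apply/seteqP; split => x //= _; exact: leey.
rewrite (_ : [set x | _] = \bigcap_(r in [set: R]) [set x | f x <= r%:E]).
  exact: closed_bigI.
apply/seteqP; split => x /= fx.
  by move=> r _; apply: le_trans fx _; exact: leNye.
by rewrite (eq_ninfty (fun r => fx r I)).
Qed.

Lemma compact_lower_semicontinuous_min f (t0 : T) :
  compact [set: T] -> lower_semicontinuous f -> exists x, forall z, f x <= f z.
Proof.
move=> Tco lf.
have [x Fx] : \bigcap_(A in range (fun z => [set x | f x <= f z])) A !=set0.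
  apply: compact_chain_bigcap => //.
- by exists [set x | f x <= f t0], t0.
- by move=> _ [z _ <-]; exact: lower_semicontinuous_closed_le.
- by move=> _ [z _ <-]; exists z => /=.
- move=> _ _ [z1 _ <-] [z2 _ <-]; have [z12|z21] := leP (f z1) (f z2).
    by left => x /= /le_trans; apply.
  by right => x /= /le_trans; apply; exact: ltW.
by exists x => z; apply: (Fx [set x | f x <= f z]); exists z.
Qed.

Lemma upper_continuous_lower_semicontinuous f :
  (forall x, 0 <= f x) -> upper_continuous f -> lower_semicontinuous f.
Proof.
move=> f0 uc; apply/lower_semicontinuousP => a; have [a0|a0] := leP 0%R a.
  by apply: uc; rewrite lee_fin.
rewrite (_ : [set x | _] = setT); first exact: openT.
by apply/seteqP; split => // x _ /=; apply: lt_le_trans (f0 x); rewrite lte_fin.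
Qed.

End lower_semicontinuity.

Section geodesics.
Context {R : realType} {X : topologicalType} (rho : X * X -> \bar R).
Hypothesis X_compact : compact [set: X].
Hypothesis rho_ge0 : forall p, 0 <= rho p.
Hypothesis rho_upper_continuous : upper_continuous rho.
Hypothesis rho_inf : forall x y,
  rho (x, y) = ereal_inf [set rho (x, z) + rho (z, y) | z in [set: X]].

Lemma rho_triangle x y z : rho (x, y) <= rho (x, z) + rho (z, y).
Proof. by rewrite rho_inf; apply: ereal_inf_lbound; exists z. Qed.

Let rho_lsc : lower_semicontinuous rho.
Proof. exact: upper_continuous_lower_semicontinuous. Qed.

Lemma lower_semicontinuous_rho_from x :
  lower_semicontinuous (fun z => rho (x, z)).
Proof.
apply: (@lower_semicontinuous_comp _ _ _ (pair x) _ _ rho_lsc) => z.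
by apply: cvg_pair; [exact: cvg_cst | exact: cvg_id].
Qed.

Lemma lower_semicontinuous_rho_to y :
  lower_semicontinuous (fun z => rho (z, y)).
Proof.
apply: (@lower_semicontinuous_comp _ _ _ (pair^~ y) _ _ rho_lsc) => z.
by apply: cvg_pair; [exact: cvg_id | exact: cvg_cst].
Qed.

Lemma rho_midpoint x y : exists z, rho (x, z) + rho (z, y) <= rho (x, y).
Proof.
have lsc_xy : lower_semicontinuous (fun z => rho (x, z) + rho (z, y)).
  apply: lower_semicontinuousD => [z|z||] //.
    exact: lower_semicontinuous_rho_from.
  exact: lower_semicontinuous_rho_to.
have [z zmin] := compact_lower_semicontinuous_min _ x X_compact lsc_xy.
by exists z; rewrite (rho_inf x y); apply/ereal_infP => _ [w _ <-]; exact: zmin.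
Qed.

Section geodesic_points.
Variables x y : X.
Hypothesis rho_xy_fin : rho (x, y) \is a fin_num.

Definition on_geodesic z := rho (x, z) + rho (z, y) <= rho (x, y).

Definition on_geodesic2 z : set X :=
  [set w | rho (x, z) + rho (z, w) + rho (w, y) <= rho (x, y)].

Lemma on_geodesic_fin {z} :
  on_geodesic z -> rho (x, z) \is a fin_num /\ rho (z, y) \is a fin_num.
Proof.
move=> zxy; apply/andP; rewrite -fin_numD ge0_fin_numE ?adde_ge0//.
by apply: le_lt_trans zxy _; rewrite ltey_eq rho_xy_fin.
Qed.

Lemma on_geodesic2_neq0 {z} : on_geodesic z -> on_geodesic2 z !=set0.
Proof.
move=> zxy; have [w wzy] := rho_midpoint z y.
exists w; rewrite /on_geodesic2 /= -addeA.
by apply: le_trans zxy; exact: leeD2l.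
Qed.

Lemma on_geodesic2_on_geodesic {z w} : on_geodesic2 z w -> on_geodesic w.
Proof. by apply: le_trans; apply: leeD2r; exact: rho_triangle. Qed.

Lemma on_geodesic2_le {z w} :
  on_geodesic2 z w -> rho (x, z) + rho (z, w) <= rho (x, w).
Proof.
move=> zw; have [_ wy_fin] := on_geodesic_fin (on_geodesic2_on_geodesic zw).
by rewrite -(leeD2rE _ _ wy_fin); apply: le_trans zw (rho_triangle _ _ _).
Qed.

Lemma on_geodesic2_trans {z w} :
  on_geodesic2 z w -> on_geodesic2 w `<=` on_geodesic2 z.
Proof.
move=> zw u wu; apply: le_trans wu; apply: leeD2r.
apply: le_trans (leeD2l _ (rho_triangle z u w)) _.
by rewrite addeA; apply: leeD2r; exact: on_geodesic2_le.
Qed.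

Lemma on_geodesic2_refl_rho_eq0 {t} : on_geodesic2 t t -> rho (t, t) = 0.
Proof.
move=> tt; have [xt_fin _] := on_geodesic_fin (on_geodesic2_on_geodesic tt).
apply/eqP; rewrite eq_le rho_ge0 andbT.
by rewrite -(leeD2lE _ _ xt_fin) adde0; exact: on_geodesic2_le.
Qed.

Lemma closed_on_geodesic2 z : closed (on_geodesic2 z).
Proof.
apply: lower_semicontinuous_closed_le.
apply: lower_semicontinuousD => [w|w||]; rewrite ?adde_ge0//.
  apply: lower_semicontinuousD => //; first exact: lower_semicontinuous_cst.
  exact: lower_semicontinuous_rho_from.
exact: lower_semicontinuous_rho_to.
Qed.

Lemma on_geodesic2_chain_bound (A : set X) :
  A !=set0 -> A `<=` on_geodesic ->
  total_on A (fun s t => on_geodesic2 t `<=` on_geodesic2 s) ->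
  exists2 p, on_geodesic p &
    forall s, A s -> on_geodesic2 p `<=` on_geodesic2 s.
Proof.
move=> [s0 As0] A_geo A_tot.
have [p Ap] : \bigcap_(B in on_geodesic2 @` A) B !=set0.
  apply: compact_chain_bigcap => //.
  - by exists (on_geodesic2 s0), s0.
  - by move=> _ [s _ <-]; exact: closed_on_geodesic2.
  - by move=> _ [s As <-]; exact: on_geodesic2_neq0 (A_geo _ As).
  - by move=> _ _ [s As <-] [t At <-]; have [] := A_tot _ _ As At; [right|left].
have s0p : on_geodesic2 s0 p by apply: Ap; exists s0.
exists p; first exact: on_geodesic2_on_geodesic s0p.
by move=> s As; apply: on_geodesic2_trans; apply: Ap; exists s.
Qed.

Lemma exists_on_geodesic2_refl : exists t, on_geodesic2 t t.
Proof.
have [w0 w0_geo] := rho_midpoint x y.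
pose G := {z : X | on_geodesic z}.
pose le (s t : G) := `[< on_geodesic2 (val t) `<=` on_geodesic2 (val s) >].
have [||A A_tot|t tmax] := @ZL_preorder G (exist _ w0 w0_geo) le.
- by move=> s; apply/asboolP.
- move=> r s t /asboolP rs /asboolP st; apply/asboolP.
  exact: subset_trans st rs.
- have [[s0 As0]|A0] := pselect (A !=set0); last first.
    by exists (exist _ w0 w0_geo) => s As; exfalso; apply: A0; exists s.
  have [|||p p_geo pA] := @on_geodesic2_chain_bound (val @` A).
  + by exists (val s0), s0.
  + by move=> _ [s _ <-]; exact: valP.
  + move=> _ _ [s As <-] [t At <-].
    by have [/asboolP|/asboolP] := A_tot _ _ As At; [left|right].
  by exists (exist _ p p_geo) => s As; apply/asboolP; apply: pA; exists s.
- have [w tw] := on_geodesic2_neq0 (valP t).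
  have /asboolP wt := tmax (exist _ w (on_geodesic2_on_geodesic tw))
    (asboolT (on_geodesic2_trans tw)).
  by exists w; exact: wt.
Qed.

End geodesic_points.
End geodesics.

Theorem lemma5p13 (R : realType) (X : topologicalType)
  (rho : X * X -> \bar R) :
  compact [set: X] -> hausdorff_space X ->
  (forall p, 0 <= rho p) ->
  upper_continuous rho ->
  (forall x y : X,
     rho (x, y) = ereal_inf [set rho (x, z) + rho (z, y) | z in [set: X]]) ->
  forall x y : X,
    rho (x, y) = ereal_inf [set rho (x, a) + rho (a, y)
                           | a in [set a : X | rho (a, a) = 0]].
Proof.
move=> X_compact _ rho_ge0 rho_uc rho_inf x y.
apply/le_anti/andP; split.
  by apply/ereal_infP => _ [a _ <-]; exact: rho_triangle.
have [->|xy_lt] := eqVneq (rho (x, y)) +oo; first exact: leey.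
have xy_fin : rho (x, y) \is a fin_num by rewrite ge0_fin_numE // ltey.
have [t tt] :=
  exists_on_geodesic2_refl rho X_compact rho_ge0 rho_uc rho_inf _ _ xy_fin.
apply: ge_ereal_inf; exists (rho (x, t) + rho (t, y)).
  by exists t => //; exact: on_geodesic2_refl_rho_eq0 tt.
exact: on_geodesic2_on_geodesic tt.
Qed.
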